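(* Let $H$ and $E$ be Hilbert spaces, let $T:H\to H$ be a bounded linear operator with $\ker T=\{0\}$, let $\gamma:E\to H$ be a bounded linear operator with $\ker\gamma=\{0\}$ and $\mathcal{R}(T)\cap\mathcal{R}(\gamma)=\{0\}$, and let $\Lambda$ be a linear operator in $E$ with domain $\mathcal{D}(\Lambda)$. Define $A,\Gamma_0$ on $\mathcal{R}(T)\dot+\mathcal{R}(\gamma)$ by $A(Tf+\gamma\varphi)=f$, $\Gamma_0(Tf+\gamma\varphi)=\varphi$, and $\Gamma_1$ on $\mathcal{R}(T)\dot+\gamma\mathcal{D}(\Lambda)$ by $\Gamma_1(Tf+\gamma\varphi)=\gamma^*f+\Lambda\varphi$. For $\lambda\in\mathbb{C}$ with $I-\lambda T$ boundedly invertible, let $M(\lambda)$ be defined by $M(\lambda)\Gamma_0u=\Gamma_1u$ for $u\in\ker(A-\lambda I)\cap\mathcal{D}(\Gamma_1)$. Then $\lambda\mapsto M(\lambda)-M(0)$, defined for $\lambda$ with $I-\lambda T$ boundedly invertible, is an analytic operator-function whose values are bounded operators in $E$.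
   Context: $\mathcal{R}(\cdot)$ denotes range, $\dot+$ direct sum, $\gamma^*$ the adjoint of $\gamma$. Note $M(0)=\Lambda$ on $\mathcal{D}(\Lambda)$; the statement means $M(\lambda)-M(0)$, defined on $\mathcal{D}(\Lambda)$, extends to a bounded operator on $E$ depending analytically on $\lambda$. *)

From mathcomp Require Import all_boot all_algebra.
From mathcomp Require Import reals complex.
Set Implicit Arguments. Unset Strict Implicit. Unset Printing Implicit Defensive.
Import GRing.Theory Num.Theory.
Local Open Scope ring_scope.
Local Open Scope complex_scope.

Section Hilbert.
Variable R : realType.
Local Notation C := (R[i]).

Definition is_inner_product (V : lmodType C) (ip : V -> V -> C) : Prop :=
  [/\ (forall (a : C) (x y z : V), ip (a *: x + y) z = a * ip x z + ip y z),
      (forall x y : V, ip x y = (ip y x)^*),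
      (forall x : V, 0 <= ip x x) &
      (forall x : V, ip x x = 0 -> x = 0)].

Definition nrm (V : lmodType C) (ip : V -> V -> C) (x : V) : C := sqrtC (ip x x).

Definition complete_ip (V : lmodType C) (ip : V -> V -> C) : Prop :=
  forall u : nat -> V,
    (forall e : C, 0 < e -> exists N : nat, forall m n : nat,
        (N <= m)%N -> (N <= n)%N -> nrm ip (u m - u n) < e) ->
    exists l : V, forall e : C, 0 < e -> exists N : nat, forall n : nat,
        (N <= n)%N -> nrm ip (u n - l) < e.

Definition is_hilbert (V : lmodType C) (ip : V -> V -> C) : Prop :=
  is_inner_product ip /\ complete_ip ip.

Definition is_linear (U V : lmodType C) (f : U -> V) : Prop :=
  forall (a : C) (x y : U), f (a *: x + y) = a *: f x + f y.

Definition bounded_op (U V : lmodType C) (ipU : U -> U -> C) (ipV : V -> V -> C)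
  (f : U -> V) : Prop :=
  is_linear f /\ exists M : C, 0 <= M /\ forall x : U, nrm ipV (f x) <= M * nrm ipU x.

Definition is_adjoint (U V : lmodType C) (ipU : U -> U -> C) (ipV : V -> V -> C)
  (g : U -> V) (gs : V -> U) : Prop :=
  forall (x : U) (y : V), ipV (g x) y = ipU x (gs y).

Definition bdd_invertible_at (H : lmodType C) (ipH : H -> H -> C) (T : H -> H)
  (lam : C) : Prop :=
  exists S : H -> H, bounded_op ipH ipH S /\
    (forall x, S (x - lam *: T x) = x) /\ (forall x, S x - lam *: T (S x) = x).

(* F : C -> (E -> E) is an analytic (holomorphic in operator norm) operator
   function on the set Om *)
Definition analytic_opfun_on (E : lmodType C) (ipE : E -> E -> C)
  (Om : C -> Prop) (F : C -> E -> E) : Prop :=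
  forall l0, Om l0 -> exists D : E -> E, bounded_op ipE ipE D /\
    forall e : C, 0 < e -> exists d : C, 0 < d /\
      forall l, Om l -> 0 < `|l - l0| < d -> forall x : E,
        nrm ipE ((l - l0)^-1 *: (F l x - F l0 x) - D x) <= e * nrm ipE x.

Definition linear_op_dom (E : lmodType C) (Dom : E -> Prop) (Lam : E -> E) : Prop :=
  Dom 0 /\ (forall (a : C) x y, Dom x -> Dom y -> Dom (a *: x + y)) /\
  (forall (a : C) x y, Dom x -> Dom y -> Lam (a *: x + y) = a *: Lam x + Lam y).

Section Triplet.
Variables (H E : lmodType C) (T : H -> H) (g : E -> H) (gs : H -> E)
  (Dom : E -> Prop) (Lam : E -> E).

Definition A_rel (u v : H) : Prop := exists f phi, u = T f + g phi /\ v = f.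
Definition Gamma0_rel (u : H) (w : E) : Prop :=
  exists f phi, u = T f + g phi /\ w = phi.
Definition Gamma1_rel (u : H) (w : E) : Prop :=
  exists f phi, Dom phi /\ u = T f + g phi /\ w = gs f + Lam phi.

Definition M_rel (lam : C) (phi psi : E) : Prop :=
  exists u : H, A_rel u (lam *: u) /\ Gamma0_rel u phi /\ Gamma1_rel u psi.
End Triplet.

End Hilbert.

(* M(λ)φ = λ γ*(I - λT)^{-1} γ φ + Λφ, because the defect vectors of A at λ are
   u = T f + γφ with f = λ(I - λT)^{-1}γφ.  Hence M(λ) - M(0) = λ γ*(I - λT)^{-1}γ,
   and the resolvent identity
   λ(I - λT)^{-1} - λ0(I - λ0T)^{-1} = (λ - λ0)(I - λT)^{-1}(I - λ0T)^{-1}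
   shows that its difference quotients converge in operator norm to
   γ*(I - λ0T)^{-2}γ; the needed uniform bound on (I - λT)^{-1} near λ0 comes
   from absorbing the term (λ - λ0) (I - λ0T)^{-1} T (I - λT)^{-1}. *)
From mathcomp Require Import all_boot all_order all_algebra.
From mathcomp Require Import reals complex.
From mathcomp Require Import ring.
From Stdlib Require Import ClassicalEpsilon.
Set Implicit Arguments. Unset Strict Implicit. Unset Printing Implicit Defensive.
Import Order.TTheory GRing.Theory Num.Theory.
Local Open Scope ring_scope.

Section InnerProduct.
Variable R : realType.
Local Notation C := R[i].
Variables (V : lmodType C) (ip : V -> V -> C).
Hypothesis hip : is_inner_product ip.

Lemma ipDl x y z : ip (x + y) z = ip x z + ip y z.
Proof. have [h _ _ _] := hip. by rewrite -{1}(scale1r x) h mul1r. Qed.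

Lemma ip0l z : ip 0 z = 0.
Proof. by apply: (addrI (ip 0 z)); rewrite -ipDl !addr0. Qed.

Lemma ipZl a x z : ip (a *: x) z = a * ip x z.
Proof. have [h _ _ _] := hip. by rewrite -(addr0 (a *: x)) h ip0l addr0. Qed.

Lemma ipBl x y z : ip (x - y) z = ip x z - ip y z.
Proof. by rewrite ipDl -scaleN1r ipZl mulN1r. Qed.

Lemma ipC x y : ip x y = (ip y x)^*.
Proof. by have [_ h _ _] := hip; apply: h. Qed.

Lemma ipDr x y z : ip x (y + z) = ip x y + ip x z.
Proof. by rewrite ipC ipDl rmorphD /= -!ipC. Qed.

Lemma ipZr a x y : ip x (a *: y) = a^* * ip x y.
Proof. by rewrite ipC ipZl rmorphM /= -!ipC. Qed.

Lemma ip0r x : ip x 0 = 0.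
Proof. by rewrite ipC ip0l rmorph0. Qed.

Lemma ipBr x y z : ip x (y - z) = ip x y - ip x z.
Proof. by rewrite ipC ipBl rmorphB /= -!ipC. Qed.

Lemma ip_ge0 x : 0 <= ip x x.
Proof. by have [_ _ h _] := hip. Qed.

Lemma ip_eq0 x : ip x x = 0 -> x = 0.
Proof. by have [_ _ _ h] := hip; apply: h. Qed.

Lemma nrm_ge0 x : 0 <= nrm ip x.
Proof. by rewrite sqrtC_ge0 ip_ge0. Qed.

Lemma nrmK x : nrm ip x ^+ 2 = ip x x.
Proof. exact: sqrtCK. Qed.

Lemma nrmZ a x : nrm ip (a *: x) = `|a| * nrm ip x.
Proof.
rewrite /nrm ipZl ipZr mulrA -normCK sqrtCM ?nnegrE ?exprn_ge0 ?ip_ge0 //.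
by rewrite sqrCK.
Qed.

Lemma ip_CauchySchwarz_sqr x y : `|ip x y| ^+ 2 <= ip x x * ip y y.
Proof.
set p := ip x y; set q := ip y y.
have [q0|qn0] := eqVneq q 0.
  by rewrite /p (ip_eq0 q0) ip0r normr0 expr0n /= -/q q0 mulr0.
have qgt0 : 0 < q by rewrite lt_def qn0 ip_ge0.
have qc : q^* = q := geC0_conj (ip_ge0 y).
(* Expand 0 <= <x - (p/q) y, x - (p/q) y>. *)
have := ip_ge0 (x - (p / q) *: y).
rewrite !ipBl !ipBr !ipZl !ipZr -/p -/q (ipC y x) -/p rmorphM /= fmorphV /= qc.
rewrite normCK -(pmulr_rge0 _ qgt0) => h; rewrite -subr_ge0; apply: le_trans h _.
by rewrite le_eqVlt; apply/orP; left; apply/eqP; field.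
Qed.

Lemma ip_CauchySchwarz x y : `|ip x y| <= nrm ip x * nrm ip y.
Proof.
rewrite -(ler_pXn2r (n:=2)) ?nnegrE ?mulr_ge0 ?nrm_ge0 //.
by rewrite exprMn !nrmK ip_CauchySchwarz_sqr.
Qed.

Lemma nrmD_le x y : nrm ip (x + y) <= nrm ip x + nrm ip y.
Proof.
rewrite -(ler_pXn2r (n:=2)) ?nnegrE ?addr_ge0 ?nrm_ge0 //.
rewrite nrmK sqrrD !nrmK ipDl !ipDr (ipC y x).
set p := ip x y.
have re_le : p + p^* <= (nrm ip x * nrm ip y) *+ 2.
  apply: le_trans (real_ler_norm _) _.
    by rewrite CrealE rmorphD /= conjCK addrC.
  apply: le_trans (ler_normD _ _) _.
  by rewrite norm_conjC mulr2n lerD ?ip_CauchySchwarz.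
have -> : ip x x + p + (p^* + ip y y) = ip x x + (p + p^*) + ip y y.
  by rewrite !addrA.
by rewrite lerD2r lerD2l.
Qed.

End InnerProduct.

Lemma absorb_half (F : numFieldType) (n a c : F) :
  0 <= n -> c <= 2^-1 -> n <= a + c * n -> n <= 2 * a.
Proof.
move=> n0 c2 h.
have h2 : n <= a + 2^-1 * n by apply: le_trans h _; rewrite lerD2l ler_wpM2r.
rewrite -subr_ge0 (_ : _ - _ = 2 * (a + 2^-1 * n - n)) ?mulr_ge0 ?subr_ge0 //.
by field.
Qed.

Lemma exists_small_radius (F : numFieldType) (e k K : F) :
  0 < e -> 0 <= k -> 0 <= K ->
  exists2 d, 0 < d & forall r, 0 <= r -> r < d -> r * k <= 2^-1 /\ r * K <= e.
Proof.
move=> e0 k0 K0; set s := 2 * k + K / e + 1.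
have inv_e_gt0 : 0 < e^-1 by rewrite invr_gt0.
have inv_e_ge0 := ltW inv_e_gt0.
have s0 : 0 < s by apply: ltr_pwDr; rewrite ?ltr01 ?addr_ge0 ?mulr_ge0.
exists s^-1 => [|r r0]; first by rewrite invr_gt0.
rewrite -[r < _](ltr_pM2r s0) mulVf ?gt_eqF // => /ltW.
have rk : 0 <= r * k by rewrite mulr_ge0.
have rK : 0 <= r * K / e by rewrite !mulr_ge0.
rewrite (_ : r * s = 2 * (r * k) + r * K / e + r); last by rewrite /s; ring.
move=> le1; split.
  rewrite -[_ <= _](ler_pM2l (ltr0n _ 2)) mulfV ?pnatr_eq0 //.
  by apply: le_trans le1; rewrite -addrA lerDl addr_ge0.
rewrite -(ler_pM2r inv_e_gt0) mulfV ?gt_eqF //.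
by apply: le_trans le1; rewrite addrAC lerDr addr_ge0 ?mulr_ge0.
Qed.

Section LinearMap.
Variable R : realType.
Local Notation C := R[i].
Variables (U W : lmodType C) (f : U -> W).
Hypothesis hf : is_linear f.

Lemma lin0 : f 0 = 0.
Proof.
have e := hf 1 0 0; rewrite !scale1r addr0 in e.
by apply: (addrI (f 0)); rewrite addr0 -e.
Qed.

Lemma linD x y : f (x + y) = f x + f y.
Proof. by have := hf 1 x y; rewrite !scale1r. Qed.

Lemma linZ a x : f (a *: x) = a *: f x.
Proof. by have := hf a x 0; rewrite !addr0 lin0 addr0. Qed.

Lemma linB x y : f (x - y) = f x - f y.
Proof. by rewrite linD -scaleN1r linZ scaleN1r. Qed.

End LinearMap.

Section BoundedOperator.
Variable R : realType.
Local Notation C := R[i].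
Variables (U V W : lmodType C).
Variables (ipU : U -> U -> C) (ipV : V -> V -> C) (ipW : W -> W -> C).

Lemma bounded_op_comp (f : U -> V) (h : V -> W) :
  bounded_op ipU ipV f -> bounded_op ipV ipW h -> bounded_op ipU ipW (h \o f).
Proof.
move=> [fL [Mf [Mf0 fB]]] [hL [Mh [Mh0 hB]]]; split=> [a x y|] /=.
  by rewrite fL hL.
exists (Mh * Mf); split=> [|x /=]; first exact: mulr_ge0.
by apply: le_trans (hB _) _; rewrite -mulrA ler_wpM2l.
Qed.

Lemma bounded_op_scale (a : C) :
  is_inner_product ipU -> bounded_op ipU ipU ( *:%R a).
Proof.
move=> hipU; split=> [b x y|] /=; first by rewrite scalerDr !scalerA mulrC.
by exists `|a|; split=> // x; rewrite nrmZ.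
Qed.

Section Adjoint.
Hypotheses (hipU : is_inner_product ipU) (hipV : is_inner_product ipV).
Variables (g : U -> V) (gs : V -> U).
Hypothesis adj : is_adjoint ipU ipV g gs.

Lemma adjoint_linear : is_linear gs.
Proof.
move=> a y z; apply/eqP; rewrite -subr_eq0; apply/eqP; apply: (ip_eq0 hipU).
set d := gs _ - _.
by rewrite {2}/d ipBr // ipDr // ipZr // -!adj ipDr // ipZr // subrr.
Qed.

(* |gs y|^2 = <g (gs y), y>, which Cauchy-Schwarz bounds by |g (gs y)| |y|. *)
Lemma adjoint_bounded : bounded_op ipU ipV g -> bounded_op ipV ipU gs.
Proof.
move=> [_ [Ng [Ng0 g_nrm]]]; split; first exact: adjoint_linear.
exists Ng; split=> // y.
have := nrm_ge0 hipU (gs y); rewrite le_eqVlt => /orP[/eqP <-|npos].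
  by rewrite mulr_ge0 ?nrm_ge0.
rewrite -(ler_pM2r npos) -expr2 nrmK // -adj.
have ip_gsy_ge0 : 0 <= ipV (g (gs y)) y by rewrite adj ip_ge0.
apply: le_trans (real_ler_norm (ger0_real ip_gsy_ge0)) _.
apply: le_trans (ip_CauchySchwarz hipV _ _) _.
by rewrite mulrAC ler_wpM2r ?nrm_ge0.
Qed.

End Adjoint.
End BoundedOperator.

Section ResolventIdentity.
Variable R : realType.
Local Notation C := R[i].
Variables (H : lmodType C) (T S0 S : H -> H) (l0 l : C).
Hypotheses (TL : is_linear T) (S0L : is_linear S0) (SL : is_linear S).
Hypotheses (S0_left : forall x, S0 (x - l0 *: T x) = x)
           (S0_right : forall x, S0 x - l0 *: T (S0 x) = x).
Hypotheses (S_left : forall x, S (x - l *: T x) = x)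
           (S_right : forall x, S x - l *: T (S x) = x).

Lemma resolvent_commute y : T (S y) = S (T y).
Proof. by have := S_left (T (S y)); rewrite -linZ // -linB // S_right. Qed.

Lemma resolvent_identity y : S y = S0 y + (l - l0) *: S0 (T (S y)).
Proof.
rewrite -linZ // -linD // -{2}(S_right y) -addrA -scaleNr -scalerDl addKr.
by rewrite scaleNr S0_left.
Qed.

Lemma scaled_resolvent_identity w :
  l *: S w - l0 *: S0 w = (l - l0) *: S (S0 w).
Proof.
have e1 : S w = S0 w + (l - l0) *: S (T (S0 w)).
  rewrite {1}(_ : w = (S0 w - l *: T (S0 w)) + (l - l0) *: T (S0 w)).
    by rewrite (linD SL) (linZ SL) S_left.
  by rewrite scalerBl addrA subrK S0_right.
have e2 : S (S0 w) = S0 w + l *: S (T (S0 w)).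
  by rewrite -resolvent_commute -{2}(S_right (S0 w)) subrK.
rewrite e1 e2 !scalerDr !scalerA (mulrC (l - l0) l) scalerBl.
by rewrite addrAC.
Qed.

Lemma resolvent_diff_quotient w : l != l0 ->
  (l - l0)^-1 *: (l *: S w - l0 *: S0 w) - S0 (S0 w)
    = (l - l0) *: S0 (T (S (S0 w))).
Proof.
move=> ll0; rewrite scaled_resolvent_identity scalerA mulVf ?subr_eq0 //.
by rewrite scale1r {1}resolvent_identity addrAC subrr add0r.
Qed.

Variables (ipH : H -> H -> C) (N0 NT : C).
Hypotheses (hipH : is_inner_product ipH) (N00 : 0 <= N0).
Hypotheses (S0_nrm : forall x, nrm ipH (S0 x) <= N0 * nrm ipH x)
           (T_nrm : forall x, nrm ipH (T x) <= NT * nrm ipH x).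

(* Absorb the term (l - l0) S0 T S of the resolvent identity into its left side. *)
Lemma resolvent_nrm_le_near : `|l - l0| * (N0 * NT) <= 2^-1 ->
  forall y, nrm ipH (S y) <= 2 * (N0 * nrm ipH y).
Proof.
move=> small y; apply: (absorb_half (nrm_ge0 hipH _) small).
rewrite {1}resolvent_identity; apply: le_trans (nrmD_le hipH _ _) _.
apply: lerD => //; rewrite nrmZ // -mulrA ler_wpM2l //.
by apply: le_trans (S0_nrm _) _; rewrite -mulrA ler_wpM2l.
Qed.

End ResolventIdentity.

Section BoundaryTriplet.
Variable R : realType.
Local Notation C := R[i].
Variables (H E : lmodType C) (T : H -> H) (g : E -> H) (gs : H -> E)
  (Dom : E -> Prop) (Lam : E -> E).
Local Notation M_rel := (M_rel T g gs Dom Lam).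

Section Uniqueness.
Hypotheses (TL : is_linear T) (gL : is_linear g).
Hypotheses (T_inj : forall f, T f = 0 -> f = 0)
           (g_inj : forall phi, g phi = 0 -> phi = 0)
           (range_cap0 : forall f phi, T f = g phi -> T f = 0).

Lemma direct_sum_coord_unique f phi f' phi' :
  T f + g phi = T f' + g phi' -> f = f' /\ phi = phi'.
Proof.
move=> e; have eTg : T (f - f') = g (phi' - phi).
  by rewrite !linB // -[T f](addrK (g phi)) e addrAC (addrC (T f')) addrK.
have /eqP : f - f' = 0 by apply/T_inj/(range_cap0 eTg).
rewrite subr_eq0 => /eqP eff; split=> //; apply/eqP; rewrite eq_sym -subr_eq0.
by apply/eqP/g_inj; rewrite -eTg eff subrr lin0.
Qed.

Lemma M_relP l phi psi : M_rel l phi psi ->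
  Dom phi /\ exists2 f, f - l *: T f = l *: g phi & psi = gs f + Lam phi.
Proof.
move=> [u [[f1 [phi1 [eu1 el]]] [[f2 [phi2 [eu2 ->]]] [f3 [phi3 [D3 [eu3 ->]]]]]]].
have [<- ephi3] := direct_sum_coord_unique (etrans (esym eu1) eu3).
have [_ <-] := direct_sum_coord_unique (etrans (esym eu1) eu2).
rewrite -ephi3 in D3 *; split=> //; exists f1 => //.
by rewrite -{1}el eu1 scalerDr addrAC subrr add0r.
Qed.

Lemma M_rel_eq (S : H -> H) l phi psi : (forall x, S (x - l *: T x) = x) ->
  M_rel l phi psi -> psi = gs (S (l *: g phi)) + Lam phi.
Proof. by move=> S_left /M_relP[_ [f <- ->]]; rewrite S_left. Qed.

End Uniqueness.

Lemma M_rel_of_dom (S : H -> H) l phi : (forall x, S x - l *: T (S x) = x) ->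
  Dom phi -> M_rel l phi (gs (S (l *: g phi)) + Lam phi).
Proof.
move=> S_right Dphi; set f := S (l *: g phi).
exists (T f + g phi); split; [|split]; exists f, phi => //.
by split=> //; rewrite scalerDr -(S_right (l *: g phi)) -/f addrC subrK.
Qed.

End BoundaryTriplet.

Section WeylFunctionDifference.
Variable R : realType.
Local Notation C := R[i].
Variables (H E : lmodType C) (ipH : H -> H -> C) (ipE : E -> E -> C).
Hypotheses (hipH : is_inner_product ipH) (hipE : is_inner_product ipE).
Variables (T : H -> H) (g : E -> H) (gs : H -> E).
Hypotheses (T_bdd : bounded_op ipH ipH T) (g_bdd : bounded_op ipE ipH g).
Hypothesis adj : is_adjoint ipE ipH g gs.

(* An arbitrary map when I - l T is not boundedly invertible. *)
Definition resolvent (l : C) : H -> H :=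
  epsilon (inhabits id) (fun S => bounded_op ipH ipH S /\
    (forall x, S (x - l *: T x) = x) /\ (forall x, S x - l *: T (S x) = x)).

Lemma resolventP l : bdd_invertible_at ipH T l ->
  bounded_op ipH ipH (resolvent l) /\
  (forall x, resolvent l (x - l *: T x) = x) /\
  (forall x, resolvent l x - l *: T (resolvent l x) = x).
Proof. exact: epsilon_spec. Qed.

(* M(l) - M(0) = l gs (I - l T)^-1 g, see M_rel_eq. *)
Definition Mdiff (l : C) (phi : E) : E := gs (resolvent l (l *: g phi)).

Let gs_bdd := adjoint_bounded hipE hipH adj g_bdd.

Lemma Mdiff_bounded l : bdd_invertible_at ipH T l -> bounded_op ipE ipE (Mdiff l).
Proof.
move=> /resolventP[S_bdd _].
exact: bounded_op_comp (bounded_op_comp (bounded_op_comp g_bdd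
  (bounded_op_scale l hipH)) S_bdd) gs_bdd.
Qed.

Lemma Mdiff_analytic : analytic_opfun_on ipE (bdd_invertible_at ipH T) Mdiff.
Proof.
have [TL [NT [NT0 T_nrm]]] := T_bdd; have [gL [Ng [Ng0 g_nrm]]] := g_bdd.
have [gsL [Ngs [Ngs0 gs_nrm]]] := gs_bdd.
move=> l0 /resolventP[S0_bdd [S0_left S0_right]].
have [S0L [N0 [N00 S0_nrm]]] := S0_bdd.
exists (gs \o resolvent l0 \o resolvent l0 \o g); split.
  exact: bounded_op_comp (bounded_op_comp (bounded_op_comp g_bdd S0_bdd) S0_bdd)
    gs_bdd.
move=> e e0; set K := Ngs * (N0 * (NT * (2 * (N0 * (N0 * Ng))))).
have K0 : 0 <= K by rewrite !mulr_ge0.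
have [d d0 small] := exists_small_radius e0 (mulr_ge0 N00 NT0) K0.
exists d; split=> // l /resolventP[[SL _] [S_left S_right]] /andP[ll0 lld] x.
have [small_NT small_K] := small _ (normr_ge0 _) lld.
rewrite /Mdiff /= (linZ SL) (linZ S0L) -(linB gsL) -(linZ gsL) -(linB gsL).
rewrite (resolvent_diff_quotient TL S0L SL S0_left S0_right S_left S_right);
  last by rewrite -subr_eq0 -normr_gt0.
have S_nrm := resolvent_nrm_le_near S0L S0_left S_right hipH N00 S0_nrm T_nrm
  small_NT.
apply: (@le_trans _ _ (`|l - l0| * K * nrm ipE x)); last first.
  by rewrite ler_wpM2r ?nrm_ge0.
apply: le_trans (gs_nrm _) _; rewrite nrmZ // /K.
rewrite (_ : _ * _ * _ = Ngs * (`|l - l0| * (N0 * (NT * (2 * (N0 * (N0 * (Ng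
  * nrm ipE x)))))))); last by ring.
rewrite ler_wpM2l // ler_wpM2l //; apply: le_trans (S0_nrm _) _.
rewrite ler_wpM2l //; apply: le_trans (T_nrm _) _.
rewrite ler_wpM2l //; apply: le_trans (S_nrm _) _.
rewrite ler_wpM2l // ler_wpM2l //; apply: le_trans (S0_nrm _) _.
by rewrite ler_wpM2l.
Qed.

End WeylFunctionDifference.

Theorem corollary1 (R : realType)
  (H E : lmodType R[i]) (ipH : H -> H -> R[i]) (ipE : E -> E -> R[i])
  (T : H -> H) (g : E -> H) (gs : H -> E) (Dom : E -> Prop) (Lam : E -> E) :
  is_hilbert ipH -> is_hilbert ipE ->
  bounded_op ipH ipH T -> (forall f, T f = 0 -> f = 0) ->
  bounded_op ipE ipH g -> (forall phi, g phi = 0 -> phi = 0) ->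
  (forall f phi, T f = g phi -> T f = 0) ->
  is_adjoint ipE ipH g gs ->
  linear_op_dom Dom Lam ->
  exists B : R[i] -> E -> E,
    (forall lam, bdd_invertible_at ipH T lam -> bounded_op ipE ipE (B lam)) /\
    analytic_opfun_on ipE (bdd_invertible_at ipH T) B /\
    (forall lam, bdd_invertible_at ipH T lam ->
       (forall phi, (exists psi, M_rel T g gs Dom Lam lam phi psi) <-> Dom phi) /\
       (forall phi psi psi', M_rel T g gs Dom Lam lam phi psi ->
          M_rel T g gs Dom Lam lam phi psi' -> psi = psi') /\
       (forall phi psi psi0, M_rel T g gs Dom Lam lam phi psi ->
          M_rel T g gs Dom Lam 0 phi psi0 -> psi - psi0 = B lam phi)).
Proof.
move=> [hipH _] [hipE _] T_bdd T_inj g_bdd g_inj range_cap0 adj _.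
have [TL gL] := (T_bdd.1, g_bdd.1).
exists (Mdiff ipH T g gs); split; [|split].
- exact: Mdiff_bounded.
- exact: Mdiff_analytic.
move=> l /resolventP[_ [S_left S_right]]; split; [|split].
- move=> phi; split=> [[psi /(M_relP TL gL T_inj g_inj range_cap0)[]] //|Dphi].
  by eexists; apply: M_rel_of_dom S_right Dphi.
- move=> phi psi psi'.
  by do 2!move=> /(M_rel_eq TL gL T_inj g_inj range_cap0 S_left) ->.
- move=> phi psi psi0 /(M_rel_eq TL gL T_inj g_inj range_cap0 S_left) ->.
  have id_left x : x - 0 *: T x = x by rewrite scale0r subr0.
  move=> /(M_rel_eq TL gL T_inj g_inj range_cap0 (S := id) id_left) ->.
  by rewrite scale0r (lin0 (adjoint_linear hipE hipH adj)) add0r addrK.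
Qed.
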